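(* Let $\tilde\beta\subseteq\mathcal{N}$ satisfy, for each $c\in\mathcal{C}$, $|\tilde\beta\cap\mathcal{N}_c|=v_c+1$ if $|\mathcal{N}_c|>v_c$ and $|\tilde\beta\cap\mathcal{N}_c|=0$ otherwise. If $(B,\beta_1,\ldots,\beta_B)$ is a feasible solution of problem (RO-$\Sigma$), then for every $\sigma\in\Sigma$ at least one of the following holds: (i) there exist $b\in\{1,\ldots,B\}$ and $c\in\mathcal{C}$ with $|\{\sigma(j)\in\beta_b: j\in\mathcal{N}_c\}|>v_c$; (ii) $T^\sigma(\beta_1,\ldots,\beta_B,\tilde\beta)\neq T^*(\beta_1,\ldots,\beta_B,\tilde\beta)$.
   Context: A ballot style consists of contests $\mathcal{C}=\{1,\ldots,C\}$, candidates $\mathcal{N}=\{1,\ldots,N\}$ partitioned into nonempty sets $\mathcal{N}_c$ ($c\in\mathcal{C}$), and positive integers $v_c$. A filled-out ballot is a subset $\beta\subseteq\mathcal{N}$; $\mathscr{B}=\{\beta\subseteq\mathcal{N}: |\mathcal{N}_c\cap\beta|\le v_c\ \forall c\}$. For any deck of subsets and $i\in\mathcal{N}_c$: $T^*_i(\beta_1,\ldots,\beta_B)=\sum_{b=1}^B\mathbb{I}\{i\in\beta_b\text{ and }|\mathcal{N}_c\cap\beta_b|\le v_c\}$, and for a bijection $\sigma$ of $\mathcal{N}$, $T^\sigma_i(\beta_1,\ldots,\beta_B)=\sum_{b=1}^B\mathbb{I}\{\sigma(i)\in\beta_b\text{ and }|\{\sigma(j)\in\beta_b: j\in\mathcal{N}_c\}|\le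 v_c\}$. $\Sigma$ is the set of non-identity bijections $\mathcal{N}\to\mathcal{N}$. Problem (RO-$\Sigma$): minimize $B$ over $B\in\mathbb{N}$ and $\beta_1,\ldots,\beta_B\in\mathscr{B}$ subject to $T^\sigma(\beta_1,\ldots,\beta_B)\neq T^*(\beta_1,\ldots,\beta_B)$ for all $\sigma\in\Sigma$. *)

From mathcomp Require Import all_boot all_fingroup.
Set Implicit Arguments. Unset Strict Implicit. Unset Printing Implicit Defensive.

(* Ballot style: candidates 'I_N, contests 'I_C, [con i] = the contest of
   candidate i (so N_c = [set i | con i == c] is a partition of 'I_N),
   and [v c] = number of allowed votes in contest c. *)

Definition contest (N C : nat) (con : 'I_N -> 'I_C) (c : 'I_C) : {set 'I_N} :=
  [set i | con i == c].

Definition valid_ballot (N C : nat) (con : 'I_N -> 'I_C) (v : 'I_C -> nat)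
  (beta : {set 'I_N}) : bool :=
  [forall c, #|contest con c :&: beta| <= v c].

Definition Tstar (N C : nat) (con : 'I_N -> 'I_C) (v : 'I_C -> nat)
  (deck : seq {set 'I_N}) : {ffun 'I_N -> nat} :=
  [ffun i => count (fun beta : {set 'I_N} => (i \in beta) &&
                      (#|contest con (con i) :&: beta| <= v (con i))) deck].

Definition sigma_count (N C : nat) (con : 'I_N -> 'I_C) (sigma : {perm 'I_N})
  (beta : {set 'I_N}) (c : 'I_C) : nat :=
  #|[set j in contest con c | sigma j \in beta]|.

Definition Tsigma (N C : nat) (con : 'I_N -> 'I_C) (v : 'I_C -> nat)
  (sigma : {perm 'I_N}) (deck : seq {set 'I_N}) : {ffun 'I_N -> nat} :=
  [ffun i => count (fun beta : {set 'I_N} => (sigma i \in beta) &&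
                      (sigma_count con sigma beta (con i) <= v (con i))) deck].

(* (B, beta_1, ..., beta_B) is feasible for (RO-Sigma); B = size deck.
   Sigma = non-identity bijections of 'I_N = permutations sigma <> 1. *)
Definition RO_feasible (N C : nat) (con : 'I_N -> 'I_C) (v : 'I_C -> nat)
  (deck : seq {set 'I_N}) : Prop :=
  (forall beta, beta \in deck -> valid_ballot con v beta) /\
  (forall sigma : {perm 'I_N}, sigma != 1%g ->
     Tsigma con v sigma deck != Tstar con v deck).

From mathcomp Require Import all_boot all_fingroup.

Set Implicit Arguments.
Unset Strict Implicit.
Unset Printing Implicit Defensive.

(* Every nonempty contest of [btilde] is overvoted, so [btilde] adds nothing to
   [T^*]; it can only add to [T^sigma].  If [sigma] overvotes no ballot of a
   valid deck, [T^sigma_i] and [T^*_i] are the raw approval counts of [sigma i]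
   and [i], so equality on the extended deck bounds the count of [sigma i] by
   that of [i] for every [i].  Since [sigma] permutes the candidates, both
   sides have the same total, hence [T^sigma = T^*] on the original deck,
   contradicting feasibility. *)

Lemma perm_dominated_eq (T : finType) (s : {perm T}) (f : T -> nat) :
  (forall i, f (s i) <= f i) -> forall i, f (s i) = f i.
Proof.
move=> le_fs i; have sum_fs : \sum_j f (s j) = \sum_j f j.
  by rewrite [RHS](reindex_inj (@perm_inj _ s)).
have /leqifP := leqif_sum (fun j (_ : true) => leqif_eq (le_fs j)).
rewrite sum_fs ltnn; case: ifP => // /forall_inP all_eq _.
exact/eqP/all_eq.
Qed.

Section Tallies.

Variables (N C : nat) (con : 'I_N -> 'I_C) (v : 'I_C -> nat).

Definition approvals (deck : seq {set 'I_N}) (i : 'I_N) : nat :=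
  count (fun beta : {set 'I_N} => i \in beta) deck.

Lemma Tstar_valid (deck : seq {set 'I_N}) :
  (forall beta, beta \in deck -> valid_ballot con v beta) ->
  forall i, Tstar con v deck i = approvals deck i.
Proof.
move=> deck_valid i; rewrite ffunE; apply: eq_in_count => beta /deck_valid.
by move=> /forallP/(_ (con i)) ->; rewrite andbT.
Qed.

Lemma Tsigma_not_overvoted (sigma : {perm 'I_N}) (deck : seq {set 'I_N}) :
  (forall beta, beta \in deck -> forall c, sigma_count con sigma beta c <= v c) ->
  forall i, Tsigma con v sigma deck i = approvals deck (sigma i).
Proof.
by move=> deck_ok i; rewrite ffunE; apply: eq_in_count => beta /deck_ok ->;
  rewrite andbT.
Qed.

Lemma Tstar_rcons_overvoted (deck : seq {set 'I_N}) (b : {set 'I_N}) :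
  (forall i, i \in b -> v (con i) < #|contest con (con i) :&: b|) ->
  Tstar con v (rcons deck b) = Tstar con v deck.
Proof.
move=> b_overvoted; apply/ffunP => i; rewrite !ffunE -cats1 count_cat /=.
case: (boolP (i \in b)) => [/b_overvoted | _]; last by rewrite !addn0.
by rewrite ltnNge => /negbTE ->; rewrite !addn0.
Qed.

Lemma Tsigma_rcons_ge (sigma : {perm 'I_N}) (deck : seq {set 'I_N})
    (b : {set 'I_N}) (i : 'I_N) :
  Tsigma con v sigma deck i <= Tsigma con v sigma (rcons deck b) i.
Proof. by rewrite !ffunE -cats1 count_cat leq_addr. Qed.

Lemma overvoted_of_card_contest (b : {set 'I_N}) :
  (forall c, #|b :&: contest con c| =
               (if v c < #|contest con c| then (v c).+1 else 0)) ->
  forall i, i \in b -> v (con i) < #|contest con (con i) :&: b|.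
Proof.
move=> card_b i bi; rewrite setIC card_b.
have : 0 < #|b :&: contest con (con i)|.
  by apply/card_gt0P; exists i; rewrite !inE bi eqxx.
by rewrite card_b; case: ifP.
Qed.

End Tallies.

Theorem proposition8 (N C : nat) (con : 'I_N -> 'I_C) (v : 'I_C -> nat)
  (Hnonempty : forall c : 'I_C, exists i : 'I_N, con i = c)
  (Hvpos : forall c : 'I_C, 0 < v c)
  (btilde : {set 'I_N})
  (Hbtilde : forall c : 'I_C,
     #|btilde :&: contest con c| =
       (if v c < #|contest con c| then (v c).+1 else 0))
  (deck : seq {set 'I_N})
  (Hfeas : RO_feasible con v deck) :
  forall sigma : {perm 'I_N}, sigma != 1%g ->
    (exists2 beta, beta \in deck &
       exists c : 'I_C, v c < sigma_count con sigma beta c)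
    \/ Tsigma con v sigma (rcons deck btilde) != Tstar con v (rcons deck btilde).
Proof.
move=> sigma sigma_nontriv; case: Hfeas => deck_valid deck_separates.
have [overvote | no_overvote] :=
  boolP (has (fun beta => [exists c, v c < sigma_count con sigma beta c]) deck).
  by left; case/hasP: overvote => beta deck_beta /existsP[c];
    exists beta => //; exists c.
right; apply: contra (deck_separates sigma sigma_nontriv) => /eqP T_eq.
have not_overvoted beta :
    beta \in deck -> forall c, sigma_count con sigma beta c <= v c.
  move=> deck_beta c; rewrite leqNgt; apply: contra no_overvote => over.
  by apply/hasP; exists beta => //; apply/existsP; exists c.
have approvals_le (i : 'I_N) : approvals deck (sigma i) <= approvals deck i.
  rewrite -(Tsigma_not_overvoted not_overvoted) -(Tstar_valid deck_valid).
  rewrite -(Tstar_rcons_overvoted _ (overvoted_of_card_contest Hbtilde)) -T_eq.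
  exact: Tsigma_rcons_ge.
apply/eqP/ffunP => i.
rewrite (Tsigma_not_overvoted not_overvoted) (Tstar_valid deck_valid).
exact: perm_dominated_eq.
Qed.
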